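(* (Strong Laurent phenomenon.) For any $m\in\mathbb{Z}$, $$\mathcal{A}(P_1,P_2)=\bigcap_{k\in\mathbb{Z}}\mathcal{T}_k=\bigcap_{k=m-1}^{m+1}\mathcal{T}_k,$$ the intersections taken in $\Bbbk(x_1,x_2)$.
   Context: $\Bbbk$ is a field of characteristic zero and $P_1,P_2\in\Bbbk[z]$ are monic palindromic polynomials of degrees $d_1,d_2\ge0$ (palindromic: $P(z)=z^dP(z^{-1})$ for $d=\deg P$). With $x_1,x_2$ commuting indeterminates, define $x_k\in\Bbbk(x_1,x_2)$ for all $k\in\mathbb{Z}$ by $x_{k+1}x_{k-1}=P_1(x_k)$ if $k$ is even and $x_{k+1}x_{k-1}=P_2(x_k)$ if $k$ is odd. $\underline\Bbbk$ is the $\mathbb{Z}$-subalgebra of $\Bbbk$ generated by the coefficients of $P_1,P_2$; $\mathcal{A}(P_1,P_2)$ is the $\underline\Bbbk$-subalgebra of $\Bbbk(x_1,x_2)$ generated by all $x_k$; $\mathcal{T}_k=\underline\Bbbk[x_k^{\pm1},x_{k+1}^{\pm1}]$. *)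

From HB Require Import structures.
From mathcomp Require Import all_boot all_order all_algebra fraction.
Set Implicit Arguments. Unset Strict Implicit. Unset Printing Implicit Defensive.
Import Order.TTheory GRing.Theory Num.Theory.
Local Open Scope ring_scope.
Local Notation "x %:F" := (@FracField.tofrac _ x).


(* Palindromic: P(z) = z^d P(z^-1), d = deg P, i.e. coefficients symmetric. *)
Definition palindromic (k : nzRingType) (P : {poly k}) : Prop :=
  forall i : nat, (i <= (size P).-1)%N -> P`_i = P`_((size P).-1 - i).

(* The field k(x1,x2) := fraction field of k[x1][x2] (nested polynomials).
   x1 = the inner variable, x2 = the outer variable. *)
Definition Kx (k : fieldType) := {fraction {poly {poly k}}}.

Definition kemb (k : fieldType) (c : k) : Kx k := (c%:P%:P)%:F.
Definition X1 (k : fieldType) : Kx k := (('X : {poly k})%:P)%:F.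
Definition X2 (k : fieldType) : Kx k := ('X : {poly {poly k}})%:F.

Definition peval (k : fieldType) (P : {poly k}) (f : Kx k) : Kx k :=
  (map_poly (@kemb k) P).[f].

(* forward: fpair n = (x_{n+1}, x_{n+2}) *)
Fixpoint fpair (k : fieldType) (P1 P2 : {poly k}) (n : nat) : Kx k * Kx k :=
  match n with
  | 0 => (X1 k, X2 k)
  | n'.+1 => let: (a, b) := fpair P1 P2 n' in
             (b, peval (if odd n' then P2 else P1) b / a)
  end.

(* backward: bpair n = (x_{2-n}, x_{1-n}) *)
Fixpoint bpair (k : fieldType) (P1 P2 : {poly k}) (n : nat) : Kx k * Kx k :=
  match n with
  | 0 => (X2 k, X1 k)
  | n'.+1 => let: (a, b) := bpair P1 P2 n' in
             (b, peval (if odd n' then P1 else P2) b / a)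
  end.

(* x_k for k in Z: x_{k+1} x_{k-1} = P1(x_k) (k even), P2(x_k) (k odd). *)
Definition xseq (k : fieldType) (P1 P2 : {poly k}) (j : int) : Kx k :=
  if (1 <= j) then (fpair P1 P2 `|j - 1|%N).1
  else (bpair P1 P2 `|1 - j|%N).2.

Inductive gen_ring (R : nzRingType) (S : R -> Prop) : R -> Prop :=
| gr_S x : S x -> gen_ring S x
| gr_1 : gen_ring S 1
| gr_N x : gen_ring S x -> gen_ring S (- x)
| gr_D x y : gen_ring S x -> gen_ring S y -> gen_ring S (x + y)
| gr_M x y : gen_ring S x -> gen_ring S y -> gen_ring S (x * y).

(* images in k(x1,x2) of the coefficients of P1, P2 (generators of the
   Z-algebra underline-k) *)
Definition coefset (k : fieldType) (P1 P2 : {poly k}) (f : Kx k) : Prop :=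
  exists i : nat, f = kemb (P1`_i) \/ f = kemb (P2`_i).

Definition clusterA (k : fieldType) (P1 P2 : {poly k}) : Kx k -> Prop :=
  gen_ring (fun f => coefset P1 P2 f \/ exists j : int, f = xseq P1 P2 j).

Definition Tring (k : fieldType) (P1 P2 : {poly k}) (j : int) : Kx k -> Prop :=
  gen_ring (fun f => coefset P1 P2 f
     \/ f = xseq P1 P2 j \/ f = (xseq P1 P2 j)^-1
     \/ f = xseq P1 P2 (j + 1) \/ f = (xseq P1 P2 (j + 1))^-1).

From HB Require Import structures.
From mathcomp Require Import all_boot all_order all_algebra fraction.
From mathcomp Require Import polyXY ring zify.
From Stdlib Require Import ClassicalEpsilon.
Import Order.TTheory GRing.Theory Num.Theory.
Set Implicit Arguments. Unset Strict Implicit. Unset Printing Implicit Defensive.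
Local Open Scope ring_scope.
Local Notation "x %:F" := (@FracField.tofrac _ x).

(* Write T_j for kbar[x_j^(+-1), x_(j+1)^(+-1)] and P_j for the exchange polynomial
   of x_j (P1 for j even, P2 for j odd). Consecutive x_j are algebraically
   independent, and the exchange relations put x_(j-2), ..., x_(j+3) in T_j;
   palindromicity of P1 and P2 also puts x_(j-3) and x_(j+4) there.
   The key step is that the intersection of T_(m-1), T_m and T_(m+1) lies in the
   polynomial ring kbar[x_(m-1), x_m, x_(m+1), x_(m+2)]. Write f in T_m as
   F(y, z) / (y^A z^b) with y = x_m, z = x_(m+1). Membership in T_(m+1) forces the
   y-free part of F to be divisible by Q(z)^A, where Q = P_(m+1) satisfies Q(0) = 1
   and is thus prime to z; this lets one subtract an element of the polynomial ring
   and lower A. The mirror argument with T_(m-1) then removes the powers of z.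
   The polynomial ring lies in T_j for |j - m| <= 2, so the triple intersection at m
   is contained in those at m - 1 and m + 1, hence in every T_j; it also lies in A,
   and every generator x_i of A lies in the triple intersection at i. *)

Section GeneratedSubring.
Variable R : nzRingType.
Implicit Types (G H : R -> Prop) (x y : R).

Lemma gen_ring0 G : gen_ring G 0.
Proof. by rewrite -(subrr 1); apply: gr_D; [|apply: gr_N]; apply: gr_1. Qed.

Lemma gen_ringB G x y : gen_ring G x -> gen_ring G y -> gen_ring G (x - y).
Proof. by move=> gx gy; apply: gr_D => //; apply: gr_N. Qed.

Lemma gen_ringX G x n : gen_ring G x -> gen_ring G (x ^+ n).
Proof.
by move=> gx; elim: n => [|n IHn]; rewrite ?expr0 ?exprS; [apply: gr_1|apply: gr_M].
Qed.

Lemma gen_ring_sum G I (r : seq I) (P : pred I) (F : I -> R) :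
  (forall i, P i -> gen_ring G (F i)) -> gen_ring G (\sum_(i <- r | P i) F i).
Proof. by move=> gF; elim/big_ind: _ => //; [apply: gen_ring0|apply: gr_D]. Qed.

Lemma gen_ring_sub G H x :
  (forall y, G y -> gen_ring H y) -> gen_ring G x -> gen_ring H x.
Proof.
move=> GH; elim=> {x} [x /GH //||x _|x y _ + _|x y _ + _]; first exact: gr_1.
- exact: gr_N.
- exact: gr_D.
- exact: gr_M.
Qed.

End GeneratedSubring.

(** * Two-variable evaluation and algebraic independence *)

Section Evaluation.
Variable k : fieldType.
Implicit Types (y z : Kx k) (p q : {poly k}) (F : {poly {poly k}}).

Lemma kemb_is_zmod_morphism : zmod_morphism (@kemb k).
Proof. by move=> a b; rewrite /kemb !rmorphB. Qed.

Lemma kemb_is_monoid_morphism : monoid_morphism (@kemb k).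
Proof. by split=> [|a b]; rewrite /kemb ?rmorph1 ?rmorphM. Qed.

HB.instance Definition _ :=
  GRing.isZmodMorphism.Build k (Kx k) (@kemb k) kemb_is_zmod_morphism.
HB.instance Definition _ :=
  GRing.isMonoidMorphism.Build k (Kx k) (@kemb k) kemb_is_monoid_morphism.

Definition eval1 z : {poly k} -> Kx k := horner_eval z \o map_poly (@kemb k).
HB.instance Definition _ z := GRing.RMorphism.copy (eval1 z) (eval1 z).

(* [eval2 y z F] is [F(y, z)]: the outer variable goes to [y]. *)
Definition eval2 y z : {poly {poly k}} -> Kx k := horner_eval y \o map_poly (eval1 z).
HB.instance Definition _ y z := GRing.RMorphism.copy (eval2 y z) (eval2 y z).

Arguments eval1 : simpl never.
Arguments eval2 : simpl never.

Lemma eval1E z p : eval1 z p = peval p z. Proof. by []. Qed.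

Lemma eval1D z : {morph eval1 z : p q / p + q}. Proof. exact: raddfD. Qed.
Lemma eval1M z : {morph eval1 z : p q / p * q}. Proof. exact: rmorphM. Qed.
Lemma eval1Xn z n : {morph eval1 z : p / p ^+ n}. Proof. exact: rmorphXn. Qed.
Lemma eval2N y z : {morph eval2 y z : F / - F}. Proof. exact: raddfN. Qed.
Lemma eval2D y z : {morph eval2 y z : F G / F + G}. Proof. exact: raddfD. Qed.
Lemma eval2B y z : {morph eval2 y z : F G / F - G}. Proof. exact: raddfB. Qed.
Lemma eval2M y z : {morph eval2 y z : F G / F * G}. Proof. exact: rmorphM. Qed.
Lemma eval2Xn y z n : {morph eval2 y z : F / F ^+ n}. Proof. exact: rmorphXn. Qed.
Lemma eval2_1 y z : eval2 y z 1 = 1. Proof. exact: rmorph1. Qed.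

Lemma eval1C z c : eval1 z c%:P = kemb c.
Proof. by rewrite /eval1 /= horner_evalE map_polyC hornerC. Qed.

Lemma eval1X z : eval1 z 'X = z.
Proof. by rewrite /eval1 /= horner_evalE map_polyX hornerX. Qed.

Lemma eval2C y z p : eval2 y z p%:P = peval p z.
Proof. by rewrite /eval2 /= horner_evalE map_polyC hornerC. Qed.

Lemma eval2CC y z c : eval2 y z c%:P%:P = kemb c.
Proof. by rewrite eval2C -eval1E eval1C. Qed.

Lemma eval2XC y z : eval2 y z 'X%:P = z.
Proof. by rewrite eval2C -eval1E eval1X. Qed.

Lemma eval2X y z : eval2 y z 'X = y.
Proof. by rewrite /eval2 /= horner_evalE map_polyX hornerX. Qed.

Lemma eval2_lift y z p : eval2 y z (map_poly polyC p) = peval p y.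
Proof.
rewrite /eval2 /= horner_evalE -map_poly_comp /peval.
by congr (_.[_]); apply: eq_map_poly => c /=; rewrite eval1C.
Qed.

Lemma eq_rmorph_poly2 (K : comNzRingType) (f g : {rmorphism {poly {poly k}} -> K}) :
  (forall c, f c%:P%:P = g c%:P%:P) -> f 'X = g 'X -> f 'X%:P = g 'X%:P -> f =1 g.
Proof.
move=> fgC fgY fgX F; elim/poly_ind: F => [|F p IHF]; first by rewrite !rmorph0.
rewrite !rmorphD !rmorphM IHF fgY; congr (_ + _).
elim/poly_ind: p => [|p c IHp]; first by rewrite !rmorph0.
by rewrite polyCD polyCM !rmorphD !rmorphM IHp fgX fgC.
Qed.

Lemma eval2_swapXY y z F : eval2 y z (swapXY F) = eval2 z y F.
Proof.
apply: (@eq_rmorph_poly2 _ (eval2 y z \o swapXY) (eval2 z y)) => [c||] /=.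
- by rewrite swapXY_polyC map_polyC /= !eval2CC.
- by rewrite swapXY_X eval2XC eval2X.
- by rewrite swapXY_polyC map_polyX eval2X eval2XC.
Qed.

Lemma eval2_X2X1 F : eval2 (X2 k) (X1 k) F = F%:F.
Proof.
apply: (@eq_rmorph_poly2 _ (eval2 (X2 k) (X1 k)) (@FracField.tofrac _)) => [c||] /=.
- by rewrite eval2CC.
- by rewrite eval2X.
- by rewrite eval2XC.
Qed.

Definition alg_indep y z := forall F, eval2 y z F = 0 -> F = 0.

Lemma alg_indep_sym y z : alg_indep y z -> alg_indep z y.
Proof.
by move=> yz F; rewrite -eval2_swapXY => /yz /eqP; rewrite swapXY_eq0 => /eqP.
Qed.

Lemma alg_indep_X2X1 : alg_indep (X2 k) (X1 k).
Proof. by move=> F; rewrite eval2_X2X1 => /eqP; rewrite tofrac_eq0 => /eqP. Qed.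

Lemma alg_indep_neq0 y z : alg_indep y z -> y != 0 /\ z != 0.
Proof.
move=> yz; split; apply/eqP.
  by move=> y0; have := yz 'X; rewrite eval2X y0 => /(_ erefl)/eqP; rewrite polyX_eq0.
move=> z0; have := yz 'X%:P; rewrite eval2XC z0 => /(_ erefl)/eqP.
by rewrite polyC_eq0 polyX_eq0.
Qed.

Lemma peval_alg_indep_neq0 y z q : alg_indep y z -> q != 0 -> peval q z != 0.
Proof.
move=> yz q0; apply: contraNneq q0 => qz0.
by rewrite -polyC_eq0; apply/eqP/yz; rewrite eval2C.
Qed.

(* [Y^S * F(q(X)/Y, X)], a polynomial as soon as [size F <= S.+1]. *)
Definition hom_subst (S : nat) q F : {poly {poly k}} :=
  \poly_(i < S.+1) (F`_(S - i) * q ^+ (S - i)).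

Lemma eval2_hom_subst y z v S q F : v * y = peval q z -> (size F <= S.+1)%N ->
  eval2 y z (hom_subst S q F) = eval2 v z F * y ^+ S.
Proof.
move=> vyq szF; rewrite /eval2 /= !horner_evalE.
rewrite (@horner_coef_wide _ S.+1 (map_poly _ (hom_subst S q F))); last first.
  by rewrite (leq_trans (size_poly _ _)) // size_poly.
rewrite (@horner_coef_wide _ S.+1 (map_poly _ F)); last first.
  by rewrite (leq_trans (size_poly _ _)).
rewrite mulr_suml (reindex_inj rev_ord_inj) /=; apply: eq_bigr => i _.
have leiS : (i <= S)%N by rewrite -ltnS.
rewrite !coef_map /= coef_poly subSS ltnS leq_subr subKn // rmorphM rmorphXn.
by rewrite -[in y ^+ S](subnKC leiS) exprD !mulrA -(mulrA _ (v ^+ i)) -exprMn vyq.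
Qed.

Lemma alg_indep_exchange y z v q : alg_indep y z -> q != 0 -> v * y = peval q z ->
  alg_indep v z.
Proof.
move=> yz q0 vyq F F0.
have /yz hF0 : eval2 y z (hom_subst (size F) q F) = 0.
  by rewrite (eval2_hom_subst vyq) // F0 mul0r.
apply/polyP => j; rewrite coef0; have [ltjF|] := ltnP j (size F); last exact: nth_default.
have /eqP := congr1 (fun G : {poly {poly k}} => G`_(size F - j)) hF0.
rewrite coef_poly coef0 ltnS leq_subr subKn ?(ltnW ltjF) // mulf_eq0 expf_eq0.
by rewrite (negbTE q0) andbF orbF => /eqP.
Qed.

End Evaluation.

(** * Polynomials over a subring *)

Lemma polyOver_div_coprimeX (K : fieldType) (S : subringClosed K) (p q e : {poly K}) g b n :
  q`_0 = 1 -> e \is a polyOver S -> p * 'X^g = 'X^b * e * q ^+ n ->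
  exists2 d, d \is a polyOver S & p = d * q ^+ n.
Proof.
move=> q0 Se epq; have qn0 : q ^+ n != 0.
  by rewrite expf_neq0 //; apply: contra_eq_neq q0 => ->; rewrite coef0 eq_sym oner_neq0.
have cop : coprimep (q ^+ n) 'X^g.
  by rewrite coprimep_expl // coprimep_expr // coprimepX rootE horner_coef0 q0 oner_neq0.
have qn_dvd : q ^+ n %| p by rewrite -(Gauss_dvdpl _ cop) epq dvdp_mull.
exists (p %/ q ^+ n); last by rewrite divpK.
have edX : p %/ q ^+ n * 'X^g = 'X^b * e.
  by apply: (mulIf qn0); rewrite mulrAC divpK.
apply/polyOverP => i; have /(congr1 (fun r : {poly K} => r`_(i + g))) := edX.
rewrite coefMXn ltnNge leq_addl /= addnK coefXnM => ->.
by case: ifP => _; [apply: rpred0 | apply: (polyOverP Se)].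
Qed.

Lemma polyOver_divX (R : nzRingType) (S : subringClosed R) (p : {poly R}) :
  p \is a polyOver S -> p`_0 = 0 -> exists2 q, q \is a polyOver S & p = q * 'X.
Proof.
move=> Sp p0; exists (drop_poly 1 p).
  by apply/polyOverP => i; rewrite coef_drop_poly (polyOverP Sp).
rewrite -[LHS](poly_take_drop 1) expr1 [take_poly _ _](_ : _ = 0) ?add0r //.
by apply/polyP => -[|i]; rewrite coef_take_poly coef0 // p0.
Qed.

Lemma palindromic_map (K L : fieldType) (f : {rmorphism K -> L}) (p : {poly K}) :
  palindromic p -> palindromic (map_poly f p).
Proof. by move=> palp i; rewrite size_map_poly !coef_map => /palp ->. Qed.

Lemma horner_palindromic (K : fieldType) (p : {poly K}) x : palindromic p -> x != 0 ->
  p.[x^-1] * x ^+ (size p).-1 = p.[x].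
Proof.
move=> palp x0; rewrite !horner_coef mulr_suml.
case szp : (size p) => [|d]; first by rewrite !big_ord0.
rewrite /= (reindex_inj rev_ord_inj) /=; apply: eq_bigr => i _.
have leid : (i <= d)%N by rewrite -ltnS.
rewrite subSS palp szp ?leq_subr //= subKn // -mulrA; congr (_ * _).
by rewrite -[in x ^+ d](subnK leid) exprD mulrA -exprMn (mulVf x0) expr1n mul1r.
Qed.

(** * Laurent rings of a seed *)

Definition asbool (P : Prop) : bool := if excluded_middle_informative P then true else false.

Lemma asboolP P : reflect P (asbool P).
Proof. by rewrite /asbool; case: excluded_middle_informative => h; constructor. Qed.

Section Laurent.
Variables (k : fieldType) (P1 P2 : {poly k}).
Implicit Types (y z w v f : Kx k) (p q : {poly k}) (F : {poly {poly k}}).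

Definition kbar_gen (c : k) : Prop := exists i, c = P1`_i \/ c = P2`_i.

Definition kbar : pred k := fun c => asbool (gen_ring kbar_gen c).

Lemma kbar_subring_closed : subring_closed kbar.
Proof.
split; first by apply/asboolP/gr_1.
  by move=> a b /asboolP ga /asboolP gb; apply/asboolP/gen_ringB.
by move=> a b /asboolP ga /asboolP gb; apply/asboolP/gr_M.
Qed.

HB.instance Definition _ := GRing.isSubringClosed.Build k kbar kbar_subring_closed.

Local Notation kbar2 := (polyOver_pred kbar).

Lemma polyOver_kbar_P1 : P1 \is a polyOver kbar.
Proof. by apply/polyOverP => i; apply/asboolP/gr_S; exists i; left. Qed.

Lemma polyOver_kbar_P2 : P2 \is a polyOver kbar.
Proof. by apply/polyOverP => i; apply/asboolP/gr_S; exists i; right. Qed.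

Definition laurent y z : Kx k -> Prop :=
  gen_ring (fun f => coefset P1 P2 f \/ f = y \/ f = y^-1 \/ f = z \/ f = z^-1).

Definition lower_bound y z w v : Kx k -> Prop :=
  gen_ring (fun f => coefset P1 P2 f \/ f = y \/ f = z \/ f = w \/ f = v).

Section GeneratorsContainCoefficients.
Variable G : Kx k -> Prop.
Hypothesis coefsetG : forall f, coefset P1 P2 f -> G f.

Lemma gen_ring_kemb c : c \in kbar -> gen_ring G (kemb c).
Proof.
move=> /asboolP; elim=> {c} [c [i Pc]||c _|c d _ + _|c d _ + _].
- by apply/gr_S/coefsetG; exists i; case: Pc => ->; [left|right].
- by rewrite rmorph1; apply: gr_1.
- by rewrite rmorphN; apply: gr_N.
- by rewrite rmorphD; apply: gr_D.
- by rewrite rmorphM; apply: gr_M.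
Qed.

Lemma gen_ring_peval z p : gen_ring G z -> p \is a polyOver kbar -> gen_ring G (peval p z).
Proof.
move=> Gz /polyOverP kbar_p; rewrite /peval horner_coef; apply: gen_ring_sum => i _.
by apply: gr_M; [rewrite coef_map; apply: gen_ring_kemb | apply: gen_ringX].
Qed.

Lemma gen_ring_eval2 y z F :
  gen_ring G y -> gen_ring G z -> F \is a polyOver kbar2 -> gen_ring G (eval2 y z F).
Proof.
move=> Gy Gz /polyOverP kbarF; rewrite /eval2 /= horner_evalE horner_coef.
apply: gen_ring_sum => i _; apply: gr_M; last exact: gen_ringX.
by rewrite coef_map /=; apply: gen_ring_peval.
Qed.

Lemma gen_ring_peval_shift p a b : p \is a polyOver kbar -> gen_ring G a -> gen_ring G b ->
  exists2 t, gen_ring G t & peval p (a + b) = peval p a + b * t.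
Proof.
move=> kbar_p Ga Gb; set p' := map_poly (@kemb k) p.
exists (\sum_(i < size p') p'`_i * \sum_(j < i) (a + b) ^+ (i.-1 - j) * a ^+ j).
  apply: gen_ring_sum => i _; apply: gr_M.
    by rewrite coef_map; apply/gen_ring_kemb/(polyOverP kbar_p).
  by apply: gen_ring_sum => j _; apply: gr_M; apply: gen_ringX => //; apply: gr_D.
rewrite /peval !horner_coef mulr_sumr -big_split /=; apply: eq_bigr => i _.
rewrite mulrCA -mulrDr; congr (_ * _).
by have := subrXX (a + b) a i; rewrite addrAC subrr add0r => <-; rewrite [a ^+ i + _]addrC subrK.
Qed.

End GeneratorsContainCoefficients.

Lemma laurent_sym y z f : laurent y z f -> laurent z y f.
Proof. by apply: gen_ring_sub => g Gg; apply: gr_S; tauto. Qed.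

Lemma laurent_y y z : laurent y z y. Proof. by apply: gr_S; tauto. Qed.
Lemma laurent_yV y z : laurent y z y^-1. Proof. by apply: gr_S; tauto. Qed.
Lemma laurent_z y z : laurent y z z. Proof. by apply: gr_S; tauto. Qed.
Lemma laurent_zV y z : laurent y z z^-1. Proof. by apply: gr_S; tauto. Qed.

Lemma laurent_peval y z p f : p \is a polyOver kbar -> laurent y z f -> laurent y z (peval p f).
Proof. by move=> kp lf; apply: gen_ring_peval lf kp => g cg; left. Qed.

Lemma lower_bound_perm y z w v f : lower_bound y z w v f -> lower_bound z y v w f.
Proof. by apply: gen_ring_sub => g Gg; apply: gr_S; tauto. Qed.

Lemma coefset_kbar f : coefset P1 P2 f -> exists2 c, c \in kbar & f = kemb c.
Proof.
move=> [i [->|->]]; [exists P1`_i | exists P2`_i] => //.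
  exact: (polyOverP polyOver_kbar_P1).
exact: (polyOverP polyOver_kbar_P2).
Qed.

Lemma laurent_normal_form y z f : y != 0 -> z != 0 -> laurent y z f ->
  exists F a b, F \is a polyOver kbar2 /\ f * y ^+ a * z ^+ b = eval2 y z F.
Proof.
move=> y0 z0; elim=> {f} [f [/coefset_kbar[c kc ->]|[->|[->|[->|->]]]]||||].
- by exists c%:P%:P, 0%N, 0%N; rewrite eval2CC !mulr1 !polyOverC.
- by exists 'X, 0%N, 0%N; rewrite eval2X !mulr1; split => //; apply: polyOverX.
- by exists 1, 1%N, 0%N; rewrite rpred1 eval2_1 expr0 mulr1 expr1 (mulVf y0).
- by exists 'X%:P, 0%N, 0%N; rewrite eval2XC !mulr1 polyOverC polyOverX.
- by exists 1, 0%N, 1%N; rewrite rpred1 eval2_1 expr0 mulr1 expr1 (mulVf z0).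
- by exists 1, 0%N, 0%N; rewrite eval2_1 !expr0 !mulr1 rpred1.
- move=> f _ [F [a [b [kF eF]]]]; exists (- F), a, b.
  split; first by rewrite rpredN.
  by rewrite eval2N -eF !mulNr.
- move=> f g _ [F [a [b [kF eF]]]] _ [G [c [d [kG eG]]]].
  have kX : 'X \is a polyOver kbar2 by apply: polyOverX.
  have kXC : 'X%:P \is a polyOver kbar2 by rewrite polyOverC polyOverX.
  exists (F * 'X ^+ c * 'X%:P ^+ d + G * 'X ^+ a * 'X%:P ^+ b), (a + c)%N, (b + d)%N.
  split; first by rewrite !(rpredD, rpredM, rpredX).
  by rewrite eval2D !eval2M !eval2Xn eval2X eval2XC -eF -eG !exprD; ring.
- move=> f g _ [F [a [b [kF eF]]]] _ [G [c [d [kG eG]]]].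
  exists (F * G), (a + c)%N, (b + d)%N; split; first exact: rpredM.
  by rewrite eval2M -eF -eG !exprD; ring.
Qed.

Lemma polyOver_swapXY F : F \is a polyOver kbar2 -> swapXY F \is a polyOver kbar2.
Proof.
move=> /polyOverP kF; apply/polyOverP => i; apply/polyOverP => j.
by rewrite coef_swapXY; apply: (polyOverP (kF j)).
Qed.

Section ExchangeStep.
Variables (y z w v : Kx k) (P Q : {poly k}).
Hypotheses (yz : alg_indep y z) (kbarP : P \is a polyOver kbar) (kbarQ : Q \is a polyOver kbar).
Hypotheses (P0 : P`_0 = 1) (Q0 : Q`_0 = 1).
Hypotheses (wzP : w * z = peval P y) (vyQ : v * y = peval Q z).

Let y0 : y != 0. Proof. exact: (alg_indep_neq0 yz).1. Qed.
Let z0 : z != 0. Proof. exact: (alg_indep_neq0 yz).2. Qed.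
Let Q_neq0 : Q != 0.
Proof. by apply: contra_eq_neq Q0 => ->; rewrite coef0 eq_sym oner_neq0. Qed.
Let v0 : v != 0.
Proof.
by apply: contra_neq (peval_alg_indep_neq0 yz Q_neq0) => v_0; rewrite -vyQ v_0 mul0r.
Qed.

Lemma lower_bound_laurent f : lower_bound y z w v f -> laurent z v f.
Proof.
have lzv_y : laurent z v y.
  rewrite -[y](mulKf v0) vyQ; apply: gr_M; first exact: laurent_zV.
  exact/laurent_peval/laurent_y.
apply: gen_ring_sub => g [cg|[->|[->|[->|->]]]].
- by apply: gr_S; left.
- exact: lzv_y.
- exact: laurent_y.
- by rewrite -[w](mulfK z0) wzP; apply: gr_M; [apply: laurent_peval | apply: laurent_yV].
- exact: laurent_z.
Qed.

(* Clear denominators in [f = H(v, z) / (v^h z^g)] and compare the coefficients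
   of [Y^S]: this gives [F`_0 X^g = X^b H`_n Q^A]. *)
Lemma laurent_coef0_factor f A b F : F \is a polyOver kbar2 ->
  f * y ^+ A * z ^+ b = eval2 y z F -> laurent z v f ->
  exists2 D, D \is a polyOver kbar & F`_0 = D * Q ^+ A.
Proof.
move=> kF eF /laurent_sym /(laurent_normal_form v0 z0) [H [h [g [kH eH]]]].
pose n := (A + h)%N; pose S := (size H + n)%N.
have leHS : (size H <= S.+1)%N by rewrite leqW ?leq_addr.
have leNS : (n <= S)%N by rewrite leq_addl.
have eFH : F * ('X^g * Q ^+ h)%:P * 'X^S = ('X^b)%:P * 'X^n * hom_subst S Q H.
  apply/eqP; rewrite -subr_eq0; apply/eqP/yz.
  rewrite eval2B !eval2M !eval2Xn !eval2X !eval2C (eval2_hom_subst vyQ) // -eH.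
  rewrite -!eval1E !eval1M !eval1Xn !eval1X eval1E -eF -vyQ /n.
  by rewrite exprMn exprD; ring.
have := congr1 (fun G : {poly {poly k}} => G`_S) eFH.
rewrite /= coefMXn ltnn subnn coefMC -mulrA coefCM coefXnM ltnNge leNS /=.
rewrite coef_poly ltnS leq_subr subKn // /n exprD mulrA => eF0.
apply: (polyOver_div_coprimeX Q0 (polyOverP kH n) (_ : F`_0 * 'X^g = 'X^b * H`_n * Q ^+ A)).
by apply: (mulIf (expf_neq0 h Q_neq0)); rewrite eF0; ring.
Qed.

(* [l] is chosen so that [y^(A+1) z^b l = R2(y, z)] with [R2`_0 = D Q^(A+1) = F`_0],
   using [Q(z) = v y] and [P(y) = w z]. *)
Lemma laurent_peel f A b F D : F \is a polyOver kbar2 -> D \is a polyOver kbar ->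
  f * y ^+ A.+1 * z ^+ b = eval2 y z F -> F`_0 = D * Q ^+ A.+1 ->
  exists l R, [/\ lower_bound y z w v l, R \is a polyOver kbar2 &
    (f - l) * y ^+ A * z ^+ b = eval2 y z R].
Proof.
move=> kF kD eF FD.
pose phi c := if (b <= c)%N then z ^+ (c - b) else w ^+ (b - c).
pose l := v ^+ A.+1 * \sum_(c < size D) kemb D`_c * phi c.
pose R2 := \sum_(c < size D)
  ((D`_c)%:P * Q ^+ A.+1 * 'X^c)%:P * map_poly polyC P ^+ (b - c).
have ll : lower_bound y z w v l.
  apply: gr_M; first by apply/gen_ringX/gr_S; tauto.
  apply: gen_ring_sum => c _; apply: gr_M.
    by apply: gen_ring_kemb (polyOverP kD c) => g cg; left.
  by rewrite /phi; case: ifP => _; apply/gen_ringX/gr_S; tauto.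
have kR2 : R2 \is a polyOver kbar2.
  apply: rpred_sum => c _; apply: rpredM; last first.
    by apply/rpredX/polyOverP => i; rewrite coef_map polyOverC (polyOverP kbarP).
  by rewrite polyOverC !rpredM ?rpredX ?polyOverC ?polyOverX ?(polyOverP kD).
have eR2 : eval2 y z R2 = y ^+ A.+1 * z ^+ b * l.
  rewrite rmorph_sum /l mulrA mulr_sumr; apply: eq_bigr => c _ /=.
  rewrite eval2M eval2Xn eval2C -eval1E !eval1M !eval1Xn eval1C eval1X eval2_lift eval1E.
  rewrite /phi; case: leqP => [lebc|ltcb].
    rewrite (eqP (_ : b - c == 0)%N) ?subn_eq0 // expr0 mulr1 -vyQ.
    by rewrite -[in z ^+ c](subnKC lebc) exprMn exprD; ring.
  by rewrite -wzP -vyQ -[in z ^+ b](subnKC (ltnW ltcb)) !exprMn exprD; ring.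
have R2_0 : R2`_0 = F`_0.
  rewrite coef_sum FD mulrC -[in RHS](coefK D) poly_def mulr_sumr; apply: eq_bigr => c _.
  rewrite coefCM -horner_coef0 horner_exp horner_coef0 coef_map P0 expr1n mulr1.
  by rewrite -mul_polyC; ring.
have [R kR eR] : exists2 R, R \is a polyOver kbar2 & F - R2 = R * 'X.
  by apply: polyOver_divX; rewrite ?rpredB // coefB R2_0 subrr.
exists l, R; split; [exact: ll | exact: kR |]; apply: (mulIf y0).
have := congr1 (eval2 y z) eR; rewrite eval2B eval2M eval2X -eF eR2 => <-.
by rewrite exprS; ring.
Qed.

Lemma laurent_clear_ydenom f A b F : F \is a polyOver kbar2 ->
  f * y ^+ A * z ^+ b = eval2 y z F -> laurent z v f ->
  exists l G, [/\ lower_bound y z w v l, G \is a polyOver kbar2 &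
    (f - l) * z ^+ b = eval2 y z G].
Proof.
elim: A f F => [|A IHA] f F kF eF lf.
  exists 0, F; split; [exact: gen_ring0 | exact: kF |].
  by rewrite subr0 -eF expr0 mulr1.
have [D kD FD] := laurent_coef0_factor kF eF lf.
have [l [R [ll kR eR]]] := laurent_peel kF kD eF FD.
have lfl : laurent z v (f - l) by apply: gen_ringB lf (lower_bound_laurent ll).
have [l' [G [ll' kG eG]]] := IHA (f - l) R kR eR lfl.
exists (l + l'), G; split; [exact: gr_D | exact: kG |].
by rewrite opprD addrA.
Qed.

End ExchangeStep.

Lemma laurent_upper_bound y z w v P Q f : alg_indep y z ->
  P \is a polyOver kbar -> Q \is a polyOver kbar -> P`_0 = 1 -> Q`_0 = 1 ->
  w * z = peval P y -> v * y = peval Q z ->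
  laurent y z f -> laurent w y f -> laurent z v f -> lower_bound y z w v f.
Proof.
move=> yz kP kQ P0 Q0 wzP vyQ lyz lwy lzv; have [y0 z0] := alg_indep_neq0 yz.
have [F [a [b [kF eF]]]] := laurent_normal_form y0 z0 lyz.
have [l1 [G1 [ll1 kG1 eG1]]] := laurent_clear_ydenom yz kP kQ P0 Q0 wzP vyQ kF eF lzv.
have zy := alg_indep_sym yz.
have lyw : laurent y w (f - l1).
  apply: gen_ringB (laurent_sym lwy) _.
  exact: lower_bound_laurent zy kQ kP P0 vyQ wzP _ (lower_bound_perm ll1).
have eG1' : (f - l1) * z ^+ b * y ^+ 0 = eval2 z y (swapXY G1).
  by rewrite eval2_swapXY expr0 mulr1.
have [l2 [G2 [ll2 kG2 eG2]]] :=
  laurent_clear_ydenom zy kQ kP Q0 P0 vyQ wzP (polyOver_swapXY kG1) eG1' lyw.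
have -> : f = l1 + l2 + (f - l1 - l2) * y ^+ 0 by rewrite expr0 mulr1; ring.
rewrite eG2; apply: gr_D; first by apply: gr_D ll1 (lower_bound_perm ll2).
apply: gen_ring_eval2 kG2; first by move=> g cg; left.
  by apply: gr_S; tauto.
by apply: gr_S; tauto.
Qed.

Lemma laurent_palindromic_step v u z y w P Q :
  P \is a polyOver kbar -> Q \is a polyOver kbar -> palindromic P -> Q`_0 = 1 ->
  v != 0 -> u != 0 -> peval P v != 0 ->
  z * u = peval P v -> y * v = peval Q z -> w * z = peval P y -> laurent v u w.
Proof.
move=> kP kQ palP Q0 v0 u0 Pv0 zuP yvQ wzP.
have z0 : z != 0 by apply: contra_neq Pv0 => z_0; rewrite -zuP z_0 mul0r.
have lPv : laurent v u (peval P v) by apply/laurent_peval/laurent_y.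
have [Q1 kQ1 eQ1] : exists2 Q1, Q1 \is a polyOver kbar & Q - 1 = Q1 * 'X.
  by apply: polyOver_divX; rewrite ?rpredB ?rpred1 // coefB Q0 coef1 subrr.
pose s := peval Q1 z * u^-1 * v^-1.
have eQ : peval Q z = 1 + peval Q1 z * z.
  by rewrite -eval1E -(subrK 1 Q) eQ1 addrC eval1D eval1M -polyC1 eval1C eval1X rmorph1.
have ez : z = peval P v * u^-1 by rewrite -zuP (mulfK u0).
have ey : y = v^-1 + peval P v * s.
  by rewrite -[y](mulfK v0) yvQ eQ {2}ez /s; ring.
have ls : laurent v u s.
  apply: gr_M; last exact: laurent_yV; apply: gr_M; last exact: laurent_zV.
  by apply: laurent_peval kQ1 _; rewrite ez; apply: gr_M lPv (laurent_zV v u).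
have [t lt et] := gen_ring_peval_shift (fun g cg => or_introl cg) kP (laurent_yV v u) (gr_M lPv ls).
have Pinv : peval P v^-1 = peval P v * v^-1 ^+ (size P).-1.
  have palP' : palindromic (map_poly (@kemb k) P) := palindromic_map palP.
  have := horner_palindromic palP' (invr_neq0 v0).
  by rewrite invrK size_map_poly /peval => <-; rewrite exprVn.
have -> : w = u * (v^-1 ^+ (size P).-1 + s * t).
  apply: (mulIf z0); rewrite wzP ey et Pinv [in RHS]ez.
  rewrite [RHS](_ : _ = u / u * (peval P v * (v^-1 ^+ (size P).-1 + s * t))); last by ring.
  by rewrite (mulfV u0) mul1r; ring.
apply: gr_M; first exact: laurent_z.
by apply: gr_D; [apply/gen_ringX/laurent_yV | apply: gr_M ls lt].
Qed.

End Laurent.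

(** * The exchange sequence *)

Lemma odd_absz_addr1 (j : int) : odd (absz (j + 1)) = ~~ odd (absz j).
Proof.
case: j => n; first by rewrite -[1]/(1%:Z) -PoszD addn1.
by rewrite NegzE (_ : - n.+1%:Z + 1 = - n%:Z) ?abszN ?negbK //; lia.
Qed.

Section ExchangeSequence.
Variables (k : fieldType) (P1 P2 : {poly k}).
Local Notation x := (xseq P1 P2).

Definition exch_poly (j : int) : {poly k} := if odd (absz j) then P2 else P1.

Lemma exch_polyD2 j : exch_poly (j + 2) = exch_poly j.
Proof.
have -> : j + 2 = j + 1 + 1 by ring.
by rewrite /exch_poly !odd_absz_addr1 negbK.
Qed.

Lemma exch_polyB2 j : exch_poly (j - 2) = exch_poly j.
Proof. by rewrite -exch_polyD2 subrK. Qed.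

Lemma xseq_pos (n : nat) : x n.+1 = (fpair P1 P2 n).1.
Proof.
rewrite /xseq (_ : 1 <= n.+1%:Z = true); last by lia.
by congr (fpair _ _ _).1; lia.
Qed.

Lemma xseq_nonpos (n : nat) : x (- n%:Z) = (bpair P1 P2 n.+1).2.
Proof.
rewrite /xseq (_ : 1 <= - n%:Z = false); last by lia.
by congr (bpair _ _ _).2; lia.
Qed.

Lemma fpair_xseq n : fpair P1 P2 n = (x n.+1, x n.+2).
Proof. by rewrite !xseq_pos /=; case: (fpair P1 P2 n). Qed.

Lemma bpair_xseq n : bpair P1 P2 n = (x (2 - n%:Z), x (1 - n%:Z)).
Proof.
have x2 m : x (1 - m%:Z) = (bpair P1 P2 m).2.
  case: m => [|m]; first by rewrite (_ : 1 - 0%:Z = 1%:Z) ?(xseq_pos 0).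
  by rewrite (_ : 1 - m.+1%:Z = - m%:Z) ?xseq_nonpos //; lia.
case: n => [|n]; first by rewrite x2 (_ : 2 - 0%:Z = 2%:Z) ?(xseq_pos 1) //=; case: (fpair P1 P2 0).
rewrite !x2 (_ : 2 - n.+1%:Z = 1 - n%:Z) ?x2 /=; last by lia.
by case: (bpair P1 P2 n).
Qed.

Lemma xseq_forward n : x n.+3 = peval (exch_poly n.+2) (x n.+2) / x n.+1.
Proof. by rewrite (xseq_pos n.+2) /= fpair_xseq /exch_poly /=; case: (odd n). Qed.

Lemma xseq_backward n :
  x (- n%:Z) = peval (exch_poly (1 - n%:Z)) (x (1 - n%:Z)) / x (2 - n%:Z).
Proof.
rewrite xseq_nonpos /= bpair_xseq /exch_poly /= (_ : 1 - n%:Z = - n%:Z + 1); last by ring.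
by rewrite odd_absz_addr1 abszN /=; case: (odd n).
Qed.

Hypotheses (monic1 : P1 \is monic) (monic2 : P2 \is monic).

Lemma exch_poly_neq0 j : exch_poly j != 0.
Proof. by rewrite /exch_poly; case: ifP => _; apply: monic_neq0. Qed.

Lemma xseq_alg_indep j : alg_indep (x j) (x (j + 1)).
Proof.
have fwd n : alg_indep (x n.+1) (x n.+2).
  elim: n => [|n IHn]; first by rewrite !xseq_pos; apply/alg_indep_sym/alg_indep_X2X1.
  apply: alg_indep_sym; apply: (alg_indep_exchange IHn (exch_poly_neq0 n.+2)).
  by rewrite xseq_forward (divfK (alg_indep_neq0 IHn).1).
have bwd n : alg_indep (x (1 - n%:Z)) (x (2 - n%:Z)).
  elim: n => [|n IHn]; first by rewrite !subr0; apply: (fwd 0%N).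
  have -> : 1 - n.+1%:Z = - n%:Z by lia.
  have -> : 2 - n.+1%:Z = 1 - n%:Z by lia.
  apply: (alg_indep_exchange (alg_indep_sym IHn) (exch_poly_neq0 _)).
  by rewrite xseq_backward (divfK (alg_indep_neq0 IHn).2).
have [[n ->]|[n ->]] : (exists n : nat, j = n.+1%:Z) \/ (exists n : nat, j = 1 - n%:Z).
  by case: (lerP 1 j) => hj; [left; exists (absz j).-1 | right; exists (absz (1 - j))]; lia.
  by have -> : n.+1%:Z + 1 = n.+2%:Z by lia.
by have -> : 1 - n%:Z + 1 = 2 - n%:Z by ring.
Qed.

Lemma xseq_neq0 j : x j != 0.
Proof. exact: (alg_indep_neq0 (@xseq_alg_indep j)).1. Qed.

Lemma xseq_exchange j : x (j + 1) * x (j - 1) = peval (exch_poly j) (x j).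
Proof.
have [[n ->]|[n ->]] : (exists n : nat, j = n.+2%:Z) \/ (exists n : nat, j = 1 - n%:Z).
  by case: (lerP 2 j) => hj; [left; exists (absz j).-2 | right; exists (absz (1 - j))]; lia.
  have -> : n.+2%:Z - 1 = n.+1%:Z by lia.
  have -> : n.+2%:Z + 1 = n.+3%:Z by lia.
  by rewrite xseq_forward (divfK (xseq_neq0 _)).
have -> : 1 - n%:Z + 1 = 2 - n%:Z by ring.
have -> : 1 - n%:Z - 1 = - n%:Z by ring.
by rewrite xseq_backward mulrC (divfK (xseq_neq0 _)).
Qed.

Lemma xseq_exchange_idx i a b : a = i - 1 -> b = i + 1 ->
  x b * x a = peval (exch_poly i) (x i).
Proof. by move=> -> ->; apply: xseq_exchange. Qed.

Lemma peval_exch_poly_neq0 j : peval (exch_poly j) (x j) != 0.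
Proof. by rewrite -xseq_exchange mulf_neq0 ?xseq_neq0. Qed.

Hypotheses (pal1 : palindromic P1) (pal2 : palindromic P2).

Lemma exch_poly_kbar j : exch_poly j \is a polyOver (kbar P1 P2).
Proof. by rewrite /exch_poly; case: ifP => _; [apply: polyOver_kbar_P2 | apply: polyOver_kbar_P1]. Qed.

Lemma exch_poly_palindromic j : palindromic (exch_poly j).
Proof. by rewrite /exch_poly; case: ifP. Qed.

Lemma exch_poly_coef0 j : (exch_poly j)`_0 = 1.
Proof.
have monic_j : exch_poly j \is monic by rewrite /exch_poly; case: ifP.
by rewrite exch_poly_palindromic // subn0 -lead_coefE (monicP monic_j).
Qed.

Lemma Tring_xseqB1 j : Tring P1 P2 j (x (j - 1)).
Proof.
rewrite -[x (j - 1)](mulKf (xseq_neq0 (j + 1))) xseq_exchange mulrC.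
by apply: gr_M; [apply/laurent_peval/laurent_y/exch_poly_kbar | apply: laurent_zV].
Qed.

Lemma Tring_xseqD2 j : Tring P1 P2 j (x (j + 2)).
Proof.
rewrite -[x (j + 2)](mulfK (xseq_neq0 j)) (@xseq_exchange_idx (j + 1)); try ring.
by apply: gr_M; [apply/laurent_peval/laurent_z/exch_poly_kbar | apply: laurent_yV].
Qed.

Lemma Tring_xseqB2 j : Tring P1 P2 j (x (j - 2)).
Proof.
rewrite -[x (j - 2)](mulKf (xseq_neq0 j)) (@xseq_exchange_idx (j - 1)); try ring.
by apply: gr_M; [apply: laurent_yV | apply/laurent_peval/Tring_xseqB1/exch_poly_kbar].
Qed.

Lemma Tring_xseqD3 j : Tring P1 P2 j (x (j + 3)).
Proof.
rewrite -[x (j + 3)](mulfK (xseq_neq0 (j + 1))) (@xseq_exchange_idx (j + 2)); try ring.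
by apply: gr_M; [apply/laurent_peval/Tring_xseqD2/exch_poly_kbar | apply: laurent_zV].
Qed.

Lemma Tring_xseqB3 j : Tring P1 P2 j (x (j - 3)).
Proof.
apply: (laurent_palindromic_step (z := x (j - 1)) (y := x (j - 2)) (Q := exch_poly (j - 1)))
  (exch_poly_kbar j) (exch_poly_kbar _) (@exch_poly_palindromic j) (exch_poly_coef0 _)
  (xseq_neq0 j) (xseq_neq0 _) (peval_exch_poly_neq0 j) _ _ _.
- by rewrite mulrC (@xseq_exchange_idx j).
- by rewrite mulrC (@xseq_exchange_idx (j - 1)) //; ring.
- by rewrite mulrC (@xseq_exchange_idx (j - 2)) ?exch_polyB2 //; ring.
Qed.

Lemma Tring_xseqD4 j : Tring P1 P2 j (x (j + 4)).
Proof.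
apply: laurent_sym.
apply: (laurent_palindromic_step (z := x (j + 2)) (y := x (j + 3)) (Q := exch_poly (j + 2)))
  (exch_poly_kbar _) (exch_poly_kbar _) (@exch_poly_palindromic (j + 1)) (exch_poly_coef0 _)
  (xseq_neq0 _) (xseq_neq0 j) (peval_exch_poly_neq0 _) _ _ _.
- by rewrite (@xseq_exchange_idx (j + 1)) //; ring.
- by rewrite (@xseq_exchange_idx (j + 2)) //; ring.
- have -> : exch_poly (j + 1) = exch_poly (j + 3) by rewrite -exch_polyD2 -addrA.
  by rewrite (@xseq_exchange_idx (j + 3)) //; ring.
Qed.

Lemma Tring_xseq j d : -3 <= d <= 4 -> Tring P1 P2 j (x (j + d)).
Proof.
move=> led; have : d = -3 \/ d = -2 \/ d = -1 \/ d = 0 \/ d = 1 \/ d = 2 \/ d = 3 \/ d = 4.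
  by lia.
case=> [->|[->|[->|[->|[->|[->|[->|->]]]]]]].
- exact: Tring_xseqB3.
- exact: Tring_xseqB2.
- exact: Tring_xseqB1.
- by rewrite addr0; apply: laurent_y.
- exact: laurent_z.
- exact: Tring_xseqD2.
- exact: Tring_xseqD3.
- exact: Tring_xseqD4.
Qed.

Local Notation lower_bound_at m :=
  (lower_bound P1 P2 (x m) (x (m + 1)) (x (m - 1)) (x (m + 2))).

Definition Tring3 m f := [/\ Tring P1 P2 (m - 1) f, Tring P1 P2 m f & Tring P1 P2 (m + 1) f].

Lemma Tring3_lower_bound m f : Tring3 m f -> lower_bound_at m f.
Proof.
case=> Tm1 Tm Tp1.
have Tm1' : laurent P1 P2 (x (m - 1)) (x m) f by move: Tm1; rewrite /Tring subrK.
have Tp1' : laurent P1 P2 (x (m + 1)) (x (m + 2)) f by move: Tp1; rewrite /Tring -addrA.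
apply: (laurent_upper_bound (@xseq_alg_indep m) (exch_poly_kbar m) (exch_poly_kbar (m + 1))
  (exch_poly_coef0 m) (exch_poly_coef0 (m + 1)) _ _ Tm Tm1' Tp1').
  by rewrite mulrC xseq_exchange.
by rewrite (@xseq_exchange_idx (m + 1)) //; ring.
Qed.

Lemma lower_bound_Tring m j f : m - 2 <= j <= m + 2 -> lower_bound_at m f -> Tring P1 P2 j f.
Proof.
move=> near_mj; have Tx i : m - 1 <= i <= m + 2 -> Tring P1 P2 j (x i).
  move=> near_mi; rewrite (_ : i = j + (i - j)); last by ring.
  by apply: Tring_xseq; lia.
apply: gen_ring_sub => g [cg|[->|[->|[->|->]]]]; first by apply: gr_S; left.
all: by apply: Tx; lia.
Qed.

Lemma lower_bound_clusterA m f : lower_bound_at m f -> clusterA P1 P2 f.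
Proof.
apply: gen_ring_sub => g [cg|[->|[->|[->|->]]]]; first by apply: gr_S; left.
all: by apply: gr_S; right; eexists.
Qed.

Lemma Tring3_near m f : Tring3 m f -> forall j, m - 2 <= j <= m + 2 -> Tring P1 P2 j f.
Proof. by move=> /Tring3_lower_bound lf j near_mj; apply: lower_bound_Tring lf. Qed.

Lemma Tring3_all m f : Tring3 m f -> forall j, Tring P1 P2 j f.
Proof.
move=> Tm.
have step i : Tring3 i f -> Tring3 (i + 1) f /\ Tring3 (i - 1) f.
  by move=> /Tring3_near Ti; split; split; apply: Ti; lia.
have up n : Tring3 (m + n%:Z) f.
  elim: n => [|n IHn]; first by rewrite addr0.
  by rewrite (_ : m + n.+1%:Z = m + n%:Z + 1); [case: (step _ IHn) | lia].
have down n : Tring3 (m - n%:Z) f.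
  elim: n => [|n IHn]; first by rewrite subr0.
  by rewrite (_ : m - n.+1%:Z = m - n%:Z - 1); [case: (step _ IHn) | lia].
move=> j; have [[n ->]|[n ->]] : (exists n : nat, j = m + n%:Z) \/ (exists n : nat, j = m - n%:Z).
  by case: (lerP m j) => mj; [left; exists (absz (j - m)) | right; exists (absz (m - j))]; lia.
  by case: (up n).
by case: (down n).
Qed.

Lemma Tring3_xseq i : Tring3 i (x i).
Proof.
split; [rewrite -[i in x i](subrK 1) | rewrite -[i in x i]addr0 | rewrite -[i in x i](addrK 1)].
all: by apply: Tring_xseq.
Qed.

Lemma clusterA_Tring f : clusterA P1 P2 f -> forall j, Tring P1 P2 j f.
Proof.
move=> Af j; apply: gen_ring_sub Af => g [cg|[i ->]]; first by apply: gr_S; left.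
exact: Tring3_all (Tring3_xseq i) j.
Qed.

Lemma Tring_clusterA f : (forall j, Tring P1 P2 j f) -> clusterA P1 P2 f.
Proof.
by move=> Tf; apply: (@lower_bound_clusterA 0); apply: Tring3_lower_bound; split; apply: Tf.
Qed.

End ExchangeSequence.

Theorem theorem2p5 (k : fieldType) (P1 P2 : {poly k}) (m : int) :
  [pchar k] =i pred0 ->
  P1 \is monic -> P2 \is monic ->
  palindromic P1 -> palindromic P2 ->
  (forall f : Kx k, clusterA P1 P2 f <-> (forall j : int, Tring P1 P2 j f)) /\
  (forall f : Kx k, (forall j : int, Tring P1 P2 j f) <->
     [/\ Tring P1 P2 (m - 1) f, Tring P1 P2 m f & Tring P1 P2 (m + 1) f]).
Proof.
move=> _ monic1 monic2 pal1 pal2; split=> f; split.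
- exact: clusterA_Tring.
- exact: Tring_clusterA.
- by move=> Tf; split; apply: Tf.
- exact: Tring3_all.
Qed.
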